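(* Let $\mathcal C$ be a small exact category. The map $\gamma_{0,\mathcal C}:\mathsf{Cob}_0(\mathcal C)\to K_0(\mathcal C)$, $[M]\mapsto\sum_{b\in M}s(b)[X_b]$, is a well-defined isomorphism of abelian groups.
   Context: An exact category is an additive category $\mathcal C$ that is a full additive subcategory of an abelian category $\mathcal A$ with the following property: if $0\to X_1\to X_2\to X_3\to0$ is exact in $\mathcal A$ with $X_1,X_3$ in $\mathcal C$, then $X_2$ is isomorphic to an object of $\mathcal C$. Exact sequences in $\mathcal C$ are those exact sequences of $\mathcal A$ with all terms in $\mathcal C$. $K_0(\mathcal C)$ is generated by $[X]$, $X\in\mathrm{Ob}(\mathcal C)$, with $[X_2]=[X_1]+[X_3]$ for each exact sequence $0\to X_1\to X_2\to X_3\to 0$ in $\mathcal C$. A $\mathcal C$-decorated 0-foam is a finite set of points $b$, each with a sign $s(b)\in\{\pm1\}$ and an object $X_b\in\mathcal C$; $-M$ reverses signs. A $\mathcal C$-decorated 1-foam is a finite oriented graph (loops, multiple edges and circles allowed) with trivalent interior vertices. Each vertex is either ''in'' (two edges in, one out) or ''out'' (one in, two out); the two edges of equal orientation type are thin and the third is thick. The foam carries a flat connection with fibers objects of $\mathcal C$. At each vertex the thin edges are ordered, and an exact sequence $0\to X_{\mathrm{first}}\to X_{\mathrm{thick}}\to X_{\mathrm{second}}\to0$ in $\mathcal C$ of nearby fibers is fixed. Boundary points carry the fiber and sign $+$ if the edge points toward them, $-$ otherwise. A 1-foam $U$ is a cobordism from $M_0$ to $M_1$ if $\partial U\cong M_1\sqcup(-M_0)$.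 $\mathsf{Cob}_0(\mathcal C)$ is the set of $\mathcal C$-decorated 0-foams modulo the equivalence relation generated by cobordism, an abelian group under disjoint union. *)

From HB Require Import structures.
From mathcomp Require Import all_boot all_order all_algebra.
From Stdlib Require Import Relations.
Unset Printing Implicit Defensive.
Import GRing.Theory.
Local Open Scope ring_scope.

Record preadd := PreAdd {
  Obj : Type;
  Hom : Obj -> Obj -> zmodType;
  comp : forall x y z : Obj, Hom y z -> Hom x y -> Hom x z;
  idm : forall x : Obj, Hom x x
}.
Arguments comp {_ _ _ _} _ _.
Arguments idm {_} _.
Arguments Hom {_} _ _.

Section Abelian.
Context {A : preadd}.

Definition is_zero_obj (Z : Obj A) : Prop :=
  (forall X (f g : Hom Z X), f = g) /\ (forall X (f g : Hom X Z), f = g).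

Definition is_biproduct {X Y P : Obj A} (i1 : Hom X P) (i2 : Hom Y P)
  (p1 : Hom P X) (p2 : Hom P Y) : Prop :=
  [/\ comp p1 i1 = idm X, comp p2 i2 = idm Y, comp p1 i2 = 0, comp p2 i1 = 0
    & comp i1 p1 + comp i2 p2 = idm P].

Definition is_kernel {X Y K : Obj A} (f : Hom X Y) (k : Hom K X) : Prop :=
  comp f k = 0 /\
  forall W (h : Hom W X), comp f h = 0 ->
    exists u : Hom W K, comp k u = h /\ forall u', comp k u' = h -> u' = u.

Definition is_cokernel {X Y Q : Obj A} (f : Hom X Y) (c : Hom Y Q) : Prop :=
  comp c f = 0 /\
  forall W (h : Hom Y W), comp h f = 0 ->
    exists u : Hom Q W, comp u c = h /\ forall u', comp u' c = h -> u' = u.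

Definition is_mono {X Y : Obj A} (f : Hom X Y) : Prop :=
  forall W (g h : Hom W X), comp f g = comp f h -> g = h.
Definition is_epi {X Y : Obj A} (f : Hom X Y) : Prop :=
  forall W (g h : Hom Y W), comp g f = comp h f -> g = h.

Definition is_iso {X Y : Obj A} (f : Hom X Y) : Prop :=
  exists g : Hom Y X, comp g f = idm X /\ comp f g = idm Y.
Definition isomorphic (X Y : Obj A) : Prop := exists f : Hom X Y, is_iso f.

Definition is_abelian : Prop :=
  (forall (w x y z : Obj A) (h : Hom y z) (g : Hom x y) (f : Hom w x),
     comp h (comp g f) = comp (comp h g) f) /\
  (forall (x y : Obj A) (f : Hom x y), comp (idm y) f = f /\ comp f (idm x) = f) /\
  (forall (x y z : Obj A) (g g' : Hom y z) (f f' : Hom x y),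
     comp (g + g') f = comp g f + comp g' f /\
     comp g (f + f') = comp g f + comp g f') /\
  (exists Z, is_zero_obj Z) /\
  (forall X Y, exists P (i1 : Hom X P) (i2 : Hom Y P) p1 p2,
      is_biproduct i1 i2 p1 p2) /\
  (forall X Y (f : Hom X Y), exists K (k : Hom K X), is_kernel f k) /\
  (forall X Y (f : Hom X Y), exists Q (c : Hom Y Q), is_cokernel f c) /\
  (forall X Y (f : Hom X Y), is_mono f -> exists Z (g : Hom Y Z), is_kernel g f) /\
  (forall X Y (f : Hom X Y), is_epi f -> exists Z (g : Hom Z X), is_cokernel g f).

Definition short_exact {X1 X2 X3 : Obj A} (f : Hom X1 X2) (g : Hom X2 X3) : Prop :=
  is_kernel g f /\ is_cokernel f g.

End Abelian.
Arguments is_abelian : clear implicits.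

(* Exact categories: full additive subcategories of an abelian category *)
(* closed under extensions (up to isomorphism).                        *)
Record exact_cat := ExactCat {
  ambient : preadd;
  ambient_abelian : is_abelian ambient;
  inC : Obj ambient -> Prop;
  C_zero : exists Z, inC Z /\ is_zero_obj Z;
  C_biprod : forall X Y, inC X -> inC Y ->
    exists P (i1 : Hom X P) (i2 : Hom Y P) p1 p2, inC P /\ is_biproduct i1 i2 p1 p2;
  C_ext : forall X1 X2 X3 (f : Hom X1 X2) (g : Hom X2 X3),
    inC X1 -> inC X3 -> short_exact f g -> exists X, inC X /\ isomorphic X2 X
}.

Arguments inC {_} _.
Definition CObj (E : exact_cat) := {X : Obj (ambient E) | @inC E X}.
Definition CHom {E : exact_cat} (X Y : CObj E) := Hom (proj1_sig X) (proj1_sig Y).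

Inductive kexpr (E : exact_cat) :=
| kgen of CObj E
| kzero
| kadd of kexpr E & kexpr E
| kopp of kexpr E.
Arguments kzero {E}.
Arguments kgen {E} _.
Arguments kadd {E} _ _.
Arguments kopp {E} _.

Inductive keq {E : exact_cat} : kexpr E -> kexpr E -> Prop :=
| keq_refl a : keq a a
| keq_sym a b : keq a b -> keq b a
| keq_trans a b c : keq a b -> keq b c -> keq a c
| keq_add a a' b b' : keq a a' -> keq b b' -> keq (kadd a b) (kadd a' b')
| keq_opp a a' : keq a a' -> keq (kopp a) (kopp a')
| keq_assoc a b c : keq (kadd a (kadd b c)) (kadd (kadd a b) c)
| keq_comm a b : keq (kadd a b) (kadd b a)
| keq_0l a : keq (kadd kzero a) a
| keq_oppl a : keq (kadd (kopp a) a) kzero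
| keq_exact (X1 X2 X3 : CObj E) (f : CHom X1 X2) (g : CHom X2 X3) :
    short_exact f g -> keq (kgen X2) (kadd (kgen X1) (kgen X3)).

(* Decorated 0-foams (sign true = +1).                                 *)
Record foam0 (E : exact_cat) := Foam0 {
  pts : finType;
  psgn : pts -> bool;
  pobj : pts -> CObj E
}.

Arguments pts {E} _.
Arguments psgn {E} _ _.
Arguments pobj {E} _ _.
Definition foam0_neg {E} (M : foam0 E) : foam0 E :=
  @Foam0 E (pts M) (fun p => ~~ psgn M p) (pobj M).

Definition foam0_union {E} (M N : foam0 E) : foam0 E :=
  @Foam0 E (pts M + pts N)%type
    (fun p => match p with inl a => psgn M a | inr b => psgn N b end)
    (fun p => match p with inl a => pobj M a | inr b => pobj N b end).

Definition foam0_iso {E} (M N : foam0 E) : Prop :=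
  exists f : pts M -> pts N, bijective f /\
    forall p, psgn N (f p) = psgn M p /\
              isomorphic (proj1_sig (pobj M p)) (proj1_sig (pobj N (f p))).

(* Decorated 1-foams.  Half-edges are pairs (e, b); (e, true) is the   *)
(* end the edge points toward, (e, false) the end it points away from. *)
(* Each end lies at an interior vertex (inl) or a boundary point (inr).*)
(* The flat connection is given by a fiber at each half-edge together  *)
(* with the parallel transport isomorphism along each edge; circle     *)
(* components carry a fiber and a monodromy isomorphism.              *)
Record foam1 (E : exact_cat) := Foam1 {
  fV : finType;
  fE : finType;
  fB : finType;
  fCirc : finType;
  fend : fE * bool -> fV + fB;
  fbedge : fB -> fE * bool;
  fthin1 : fV -> fE * bool;
  fthin2 : fV -> fE * bool;
  fthick : fV -> fE * bool;
  ffib : fE * bool -> CObj E;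
  ftrans : forall e : fE, CHom (ffib (e, false)) (ffib (e, true));
  fcfib : fCirc -> CObj E;
  fcmono : forall c : fCirc, CHom (fcfib c) (fcfib c);
  fses_i : forall v : fV, CHom (ffib (fthin1 v)) (ffib (fthick v));
  fses_p : forall v : fV, CHom (ffib (fthick v)) (ffib (fthin2 v))
}.

Arguments fV {E} _. Arguments fE {E} _. Arguments fB {E} _. Arguments fCirc {E} _.
Arguments fend {E} _ _. Arguments fbedge {E} _ _. Arguments fthin1 {E} _ _.
Arguments fthin2 {E} _ _. Arguments fthick {E} _ _. Arguments ffib {E} _ _.
Arguments ftrans {E} _ _. Arguments fcfib {E} _ _. Arguments fcmono {E} _ _.
Arguments fses_i {E} _ _. Arguments fses_p {E} _ _.
Definition is_foam1 {E} (U : foam1 E) : Prop :=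
  (forall e, is_iso (ftrans U e)) /\
  (forall c, is_iso (fcmono U c)) /\
  (forall b h, (fend U h == inr b) = (h == fbedge U b)) /\
  (forall v, #|[pred h | fend U h == inl v]| = 3) /\
  (forall v, [/\ fend U (fthin1 U v) = inl v, fend U (fthin2 U v) = inl v,
                 fend U (fthick U v) = inl v,
                 fthin1 U v != fthin2 U v &
                 (fthin1 U v != fthick U v) && (fthin2 U v != fthick U v)]) /\
  (forall v, (fthin1 U v).2 = (fthin2 U v).2 /\
             (fthick U v).2 = ~~ (fthin1 U v).2) /\
  (forall v, short_exact (fses_i U v) (fses_p U v)).

Definition foam1_boundary {E} (U : foam1 E) : foam0 E :=
  @Foam0 E (fB U) (fun b => (fbedge U b).2) (fun b => ffib U (fbedge U b)).

Definition cobordant {E} (M0 M1 : foam0 E) : Prop :=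
  exists U : foam1 E, is_foam1 U /\
    foam0_iso (foam1_boundary U) (foam0_union M1 (foam0_neg M0)).

Definition cob_eq {E} : relation (foam0 E) := clos_refl_sym_trans _ (@cobordant E).

Definition gamma0 {E} (M : foam0 E) : kexpr E :=
  foldr (fun p acc => kadd (if psgn M p then kgen (pobj M p)
                            else kopp (kgen (pobj M p))) acc)
        kzero (enum (pts M)).

(** The class map [gamma0] is additive and kills the boundary of every 1-foam:
    along an edge the two ends carry isomorphic fibers with opposite signs, and
    at a trivalent vertex the relation [X_thick = X_first + X_second] of the
    exact sequence cancels the three signed ends.  Hence [gamma0] descends to
    [Cob_0].  Conversely every relation of [K_0] is realised by a cobordism:
    associativity, commutativity, units and inverses by cylinders (identity
    cobordisms, possibly bent into caps), and [X_2 = X_1 + X_3] by a single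
    trivalent vertex.  So [K_0 -> Cob_0], [x |-> foam of x], is well defined
    and inverse to [gamma0], since every 0-foam is cobordant to the foam of
    the formal sum of its signed points. *)

From HB Require Import structures.
From Pilot Require Import Defs.
From mathcomp Require Import all_boot all_order all_algebra.
From mathcomp Require Import boolp.
From Stdlib Require Import Relations.
Set Implicit Arguments. Unset Strict Implicit. Unset Printing Implicit Defensive.
Import GRing.Theory.
Local Open Scope quotient_scope.
Local Open Scope ring_scope.

Arguments keq_refl {E a}.
Arguments keq_sym {E a b}.
Arguments keq_trans {E a b c}.
Arguments keq_add {E a a' b b'}.
Arguments keq_opp {E a a'}.
Arguments keq_exact {E X1 X2 X3 f g}.

(** * The group K_0 as a quotient of formal expressions *)

Section K0.
Variable E : exact_cat.

HB.instance Definition _ := gen_eqMixin (kexpr E).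
HB.instance Definition _ := gen_choiceMixin (kexpr E).

Definition keqb : rel (kexpr E) := fun a b => `[< keq a b >].

Lemma keqb_refl : ssrbool.reflexive keqb.
Proof. by move=> a; apply/asboolP/keq_refl. Qed.

Lemma keqb_sym : ssrbool.symmetric keqb.
Proof. by move=> a b; apply/asboolP/asboolP => /keq_sym. Qed.

Lemma keqb_trans : ssrbool.transitive keqb.
Proof. by move=> b a c /asboolP ab /asboolP bc; apply/asboolP/(keq_trans ab bc). Qed.

Canonical keq_equiv := EquivRel keqb keqb_refl keqb_sym keqb_trans.

Definition K0 := {eq_quot keq_equiv}.
HB.instance Definition _ := Choice.on K0.
HB.instance Definition _ := Quotient.on K0.

Lemma pi_keq a b : keq a b -> \pi_K0 a = \pi_K0 b.
Proof. by move=> ab; apply/eqquotP/asboolP. Qed.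

Lemma keq_pi a b : \pi_K0 a = \pi_K0 b -> keq a b.
Proof. by move/eqquotP/asboolP. Qed.

Lemma keq_repr a : keq (repr (\pi_K0 a)) a.
Proof. by apply: keq_pi; rewrite reprK. Qed.

Definition K0_add (x y : K0) : K0 := \pi_K0 (kadd (repr x) (repr y)).
Definition K0_opp (x : K0) : K0 := \pi_K0 (kopp (repr x)).
Definition K0_zero : K0 := \pi_K0 kzero.

Lemma K0_addE a b : K0_add (\pi a) (\pi b) = \pi_K0 (kadd a b).
Proof. by apply: pi_keq; apply: keq_add; apply: keq_repr. Qed.

Lemma K0_oppE a : K0_opp (\pi a) = \pi_K0 (kopp a).
Proof. by apply: pi_keq; apply: keq_opp; apply: keq_repr. Qed.

Lemma K0_addA : associative K0_add.
Proof.
by elim/quotW=> a; elim/quotW=> b; elim/quotW=> c; rewrite !K0_addE; apply/pi_keq/keq_assoc.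
Qed.

Lemma K0_addC : commutative K0_add.
Proof. by elim/quotW=> a; elim/quotW=> b; rewrite !K0_addE; apply/pi_keq/keq_comm. Qed.

Lemma K0_add0r : left_id K0_zero K0_add.
Proof. by elim/quotW=> a; rewrite K0_addE; apply/pi_keq/keq_0l. Qed.

Lemma K0_addNr : left_inverse K0_zero K0_opp K0_add.
Proof. by elim/quotW=> a; rewrite K0_oppE K0_addE; apply/pi_keq/keq_oppl. Qed.

HB.instance Definition _ :=
  GRing.isZmodule.Build K0 K0_addA K0_addC K0_add0r K0_addNr.

Lemma piD a b : \pi_K0 (kadd a b) = \pi_K0 a + \pi_K0 b.
Proof. by rewrite -K0_addE. Qed.

Lemma piN a : \pi_K0 (kopp a) = - \pi_K0 a.
Proof. by rewrite -K0_oppE. Qed.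

End K0.

Definition kclass {E : exact_cat} (X : CObj E) : K0 E := \pi_(K0 E) (kgen X).

Section Ambient.
Variable E : exact_cat.
Notation A := (ambient E).

Lemma compA (w x y z : Obj A) (h : Defs.Hom y z) (g : Defs.Hom x y) (f : Defs.Hom w x) :
  Defs.comp h (Defs.comp g f) = Defs.comp (Defs.comp h g) f.
Proof. by case: (ambient_abelian E) => H _; apply: H. Qed.

Lemma comp1m (x y : Obj A) (f : Defs.Hom x y) : Defs.comp (idm y) f = f.
Proof. by case: (ambient_abelian E) => _ [H _]; case: (H _ _ f). Qed.

Lemma compm1 (x y : Obj A) (f : Defs.Hom x y) : Defs.comp f (idm x) = f.
Proof. by case: (ambient_abelian E) => _ [H _]; case: (H _ _ f). Qed.

Lemma comp0m (x y z : Obj A) (f : Defs.Hom x y) : Defs.comp (0 : Defs.Hom y z) f = 0.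
Proof.
case: (ambient_abelian E) => _ [_ [H _]]; case: (H x y z (0 : Defs.Hom y z) 0 f f) => + _.
rewrite addr0 => /(congr1 (fun t => t - Defs.comp 0 f)).
by rewrite addrK subrr.
Qed.

Lemma idm_iso (x : Obj A) : is_iso (idm x).
Proof. by exists (idm x); rewrite comp1m. Qed.

Lemma isomorphic_refl (x : Obj A) : isomorphic x x.
Proof. by exists (idm x); apply: idm_iso. Qed.

Lemma isomorphic_sym (x y : Obj A) : isomorphic x y -> isomorphic y x.
Proof. by case=> f [g [gf fg]]; exists g, f. Qed.

Lemma isomorphic_trans (x y z : Obj A) :
  isomorphic x y -> isomorphic y z -> isomorphic x z.
Proof.
case=> f [f' [ff' f'f]] [g [g' [gg' g'g]]].
exists (Defs.comp g f), (Defs.comp f' g'); split.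
  by rewrite -compA (compA g') gg' comp1m.
by rewrite -compA (compA f) f'f comp1m.
Qed.

Lemma kclass_zero (Z : CObj E) : is_zero_obj (proj1_sig Z) -> kclass Z = 0.
Proof.
move=> [Zout Zin].
have ex : short_exact (0 : CHom Z Z) (0 : CHom Z Z).
  split; (split; first by rewrite comp0m) => W h _; exists 0.
    by split=> [|u' _]; apply: Zin.
  by split=> [|u' _]; apply: Zout.
move: (pi_keq (keq_exact ex)); rewrite piD => /(congr1 (fun t => t - kclass Z)).
by rewrite addrK subrr.
Qed.

Lemma kclass_iso (X Y : CObj E) :
  isomorphic (proj1_sig X) (proj1_sig Y) -> kclass X = kclass Y.
Proof.
case=> f [g [gf fg]]; case: (C_zero E) => Z0 [inZ0 zero_Z0].
pose Z : CObj E := exist _ Z0 inZ0.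
have ex : short_exact (f : CHom X Y) (0 : CHom Y Z).
  split; (split; first by rewrite comp0m) => W h hf.
    exists (Defs.comp g h); split=> [|u' <-]; first by rewrite compA fg comp1m.
    by rewrite compA gf comp1m.
  exists 0; split=> [|u' _]; last exact: zero_Z0.1.
  by rewrite comp0m -[h]compm1 -fg compA hf comp0m.
by move: (pi_keq (keq_exact ex)); rewrite piD -/(kclass Z) kclass_zero ?addr0.
Qed.

End Ambient.

(** * The class of a 0-foam is a cobordism invariant *)

Section GammaClass.
Variable E : exact_cat.
Implicit Types M N : foam0 E.

Definition ksigned (s : bool) (X : CObj E) : kexpr E :=
  if s then kgen X else kopp (kgen X).

Definition signed_kclass (s : bool) (X : CObj E) : K0 E :=
  if s then kclass X else - kclass X.

Lemma pi_ksigned s X : \pi_(K0 E) (ksigned s X) = signed_kclass s X.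
Proof. by case: s; rewrite /= ?piN. Qed.

Lemma signed_kclassN s X : signed_kclass (~~ s) X = - signed_kclass s X.
Proof. by case: s; rewrite /= ?opprK. Qed.

Lemma signed_kclass_exact s (X1 X2 X3 : CObj E) (f : CHom X1 X2) (g : CHom X2 X3) :
  short_exact f g -> signed_kclass s X2 = signed_kclass s X1 + signed_kclass s X3.
Proof.
move=> /keq_exact /pi_keq; rewrite piD -!/(kclass _) => X2E.
by case: s; rewrite /= X2E ?opprD.
Qed.

Definition gamma_class M : K0 E := \sum_(p : pts M) signed_kclass (psgn M p) (pobj M p).

Lemma pi_gamma0 M : \pi_(K0 E) (gamma0 M) = gamma_class M.
Proof.
rewrite /gamma0 /gamma_class -big_enum /=.
by elim: (enum _) => [|p s IH]; rewrite ?big_nil ?big_cons //= piD IH pi_ksigned.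
Qed.

Lemma gamma_class_union M N :
  gamma_class (foam0_union M N) = gamma_class M + gamma_class N.
Proof. exact: big_sumType. Qed.

Lemma gamma_class_neg M : gamma_class (foam0_neg M) = - gamma_class M.
Proof. by rewrite /gamma_class -sumrN; apply: eq_bigr => p _; rewrite signed_kclassN. Qed.

Lemma gamma_class_iso M N : foam0_iso M N -> gamma_class M = gamma_class N.
Proof.
case=> f [[g fK gK] fP]; rewrite /gamma_class (reindex f); last by exists g.
apply: eq_bigr => p _; case: (fP p) => -> /kclass_iso.
by rewrite /signed_kclass => ->.
Qed.

End GammaClass.

Lemma uniq_subset_card_predE (T : finType) (P : pred T) (s : seq T) :
  uniq s -> {subset s <= P} -> #|P| = size s -> P =i s.
Proof.
move=> s_uniq sP cardP.
have /subset_cardP sPE : #|s| = #|P| by rewrite (card_uniqP s_uniq).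
by move=> x; rewrite (sPE (introT subsetP sP)).
Qed.

Section FoamBoundary.
Variable E : exact_cat.
Variable U : foam1 E.
Hypothesis U_wf : is_foam1 U.

Definition vertex_ends (v : fV U) : seq (fE U * bool) :=
  [:: fthin1 U v; fthin2 U v; fthick U v].

Lemma vertex_endsE v : [pred h | fend U h == inl v] =i vertex_ends v.
Proof.
case: U_wf => _ [_ [_ [card3 [endsP _]]]].
case: (endsP v) => e1 e2 ek n12 /andP[n1k n2k].
apply: uniq_subset_card_predE; last by rewrite card3.
  by rewrite /= !inE negb_or n12 n1k n2k.
by move=> h; rewrite !inE => /or3P[] /eqP ->; apply/eqP.
Qed.

Lemma vertex_ends_uniq v : uniq (vertex_ends v).
Proof.
case: U_wf => _ [_ [_ [_ [endsP _]]]].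
by case: (endsP v) => _ _ _ n12 /andP[n1k n2k]; rewrite /= !inE negb_or n12 n1k n2k.
Qed.

Definition halfedge_kclass (h : fE U * bool) : K0 E := signed_kclass h.2 (ffib U h).

Lemma sum_halfedge_kclass : \sum_h halfedge_kclass h = 0.
Proof.
have -> : \sum_h halfedge_kclass h = \sum_e \sum_(c : bool) halfedge_kclass (e, c).
  by rewrite pair_big; apply: eq_bigr => -[].
apply: big1 => e _; rewrite big_bool /halfedge_kclass /=.
case: U_wf => transP _.
rewrite (@kclass_iso _ (ffib U (e, false)) (ffib U (e, true))) ?subrr //.
by exists (Defs.ftrans U e).
Qed.

Lemma sum_vertex_halfedge_kclass v :
  \sum_(h | fend U h == inl v) halfedge_kclass h = 0.
Proof.
rewrite (eq_bigl (mem (vertex_ends v))); last exact: vertex_endsE.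
rewrite -big_uniq ?vertex_ends_uniq // /= !big_cons big_nil addr0 /halfedge_kclass.
case: U_wf => _ [_ [_ [_ [_ [signP exP]]]]].
case: (signP v) => -> ->; rewrite signed_kclassN (signed_kclass_exact _ (exP v)).
by rewrite addrA subrr.
Qed.

Lemma gamma_class_boundary : gamma_class (foam1_boundary U) = 0.
Proof.
rewrite -sum_halfedge_kclass (partition_big (fend U) xpredT) //= big_sumType /=.
rewrite big1 ?add0r => [|v _]; last exact: sum_vertex_halfedge_kclass.
case: U_wf => _ [_ [bedgeP _]].
by apply: eq_bigr => b _; rewrite (big_pred1 (fbedge U b)) // => h; rewrite /= bedgeP.
Qed.

End FoamBoundary.

Lemma gamma_class_cob_eq (E : exact_cat) (M N : foam0 E) :
  cob_eq M N -> gamma_class M = gamma_class N.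
Proof.
elim=> [{}M {}N [U [U_wf bdU]]|//|_ _ _ -> //|_ _ _ _ -> _ -> //].
move: (gamma_class_boundary U_wf).
rewrite (gamma_class_iso bdU) gamma_class_union gamma_class_neg => /eqP.
by rewrite subr_eq0 => /eqP.
Qed.

(** * Every relation of K_0 is realised by a cobordism *)

Section Foam0Iso.
Variable E : exact_cat.
Implicit Types M N P Q : foam0 E.

Definition foam0_empty : foam0 E := @Foam0 E void (fun=> true) (fun v => match v with end).

Lemma foam0_iso_of_bij M N (f : pts M -> pts N) (g : pts N -> pts M) :
  cancel f g -> cancel g f ->
  (forall p, psgn N (f p) = psgn M p) -> (forall p, pobj N (f p) = pobj M p) ->
  foam0_iso M N.
Proof.
move=> fK gK sgnf objf; exists f; split; first by exists g.
by move=> p; rewrite sgnf objf; split=> //; apply: isomorphic_refl.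
Qed.

Lemma foam0_iso_refl M : foam0_iso M M.
Proof. exact: (@foam0_iso_of_bij _ _ id id). Qed.

Lemma foam0_iso_sym M N : foam0_iso M N -> foam0_iso N M.
Proof.
case=> f [[g fK gK] fP]; exists g; split; first by exists f.
by move=> q; case: (fP (g q)); rewrite gK => -> /isomorphic_sym.
Qed.

Lemma foam0_iso_trans M N P : foam0_iso M N -> foam0_iso N P -> foam0_iso M P.
Proof.
case=> f [[f' fK f'K] fP] [g [[g' gK g'K] gP]]; exists (g \o f); split.
  by exists (f' \o g'); [exact: can_comp | exact: can_comp].
move=> p; case: (fP p) => fsgn fobj; case: (gP (f p)) => gsgn gobj.
by rewrite /= gsgn fsgn; split=> //; apply: isomorphic_trans fobj gobj.
Qed.

Lemma foam0_iso_union M M' N N' : foam0_iso M M' -> foam0_iso N N' ->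
  foam0_iso (foam0_union M N) (foam0_union M' N').
Proof.
case=> f [[f' fK f'K] fP] [g [[g' gK g'K] gP]].
exists (fun p => match p with inl a => inl (f a) | inr b => inr (g b) end); split.
  exists (fun p => match p with inl a => inl (f' a) | inr b => inr (g' b) end).
    by case=> x; rewrite ?fK ?gK.
  by case=> x; rewrite ?f'K ?g'K.
by case=> x; [apply: fP | apply: gP].
Qed.

Lemma foam0_union_comm M N : foam0_iso (foam0_union M N) (foam0_union N M).
Proof.
pose swap (S T : Type) (p : S + T) := match p with inl a => inr a | inr b => inl b end.
by apply: (@foam0_iso_of_bij (foam0_union M N) (foam0_union N M)
  (@swap (pts M) (pts N)) (@swap (pts N) (pts M))); case.
Qed.

Lemma foam0_union_assoc M N P :
  foam0_iso (foam0_union M (foam0_union N P)) (foam0_union (foam0_union M N) P).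
Proof.
pose f (p : pts M + (pts N + pts P)) : (pts M + pts N) + pts P :=
  match p with inl a => inl (inl a) | inr (inl b) => inl (inr b) | inr (inr c) => inr c end.
pose g (p : (pts M + pts N) + pts P) : pts M + (pts N + pts P) :=
  match p with inl (inl a) => inl a | inl (inr b) => inr (inl b) | inr c => inr (inr c) end.
by apply: (@foam0_iso_of_bij (foam0_union M (foam0_union N P))
  (foam0_union (foam0_union M N) P) f g); do ![case].
Qed.

Lemma foam0_union_swap M N P Q :
  foam0_iso (foam0_union (foam0_union M N) (foam0_union P Q))
            (foam0_union (foam0_union M P) (foam0_union N Q)).
Proof.
pose s (T1 T2 T3 T4 : Type) (p : (T1 + T2) + (T3 + T4)) : (T1 + T3) + (T2 + T4) :=
  match p with inl (inl a) => inl (inl a) | inl (inr b) => inr (inl b)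
             | inr (inl c) => inl (inr c) | inr (inr d) => inr (inr d) end.
by apply: (@foam0_iso_of_bij (foam0_union (foam0_union M N) (foam0_union P Q))
  (foam0_union (foam0_union M P) (foam0_union N Q)) (@s _ _ _ _) (@s _ _ _ _)); do ![case].
Qed.

Lemma foam0_union0 M : foam0_iso (foam0_union foam0_empty M) M.
Proof.
pose f (p : void + pts M) := match p with inl a => match a with end | inr b => b end.
by apply: (@foam0_iso_of_bij (foam0_union foam0_empty M) M f inr) => // -[[]|].
Qed.

Lemma foam0_neg_neg M : foam0_iso (foam0_neg (foam0_neg M)) M.
Proof.
by apply: (@foam0_iso_of_bij (foam0_neg (foam0_neg M)) M id id) => // p /=; rewrite negbK.
Qed.

Lemma foam0_neg_union M N :
  foam0_iso (foam0_neg (foam0_union M N)) (foam0_union (foam0_neg M) (foam0_neg N)).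
Proof. by apply: (@foam0_iso_of_bij (foam0_neg (foam0_union M N))
  (foam0_union (foam0_neg M) (foam0_neg N)) id id); case. Qed.

Lemma foam0_neg_empty : foam0_iso (foam0_neg foam0_empty) foam0_empty.
Proof. exact: (@foam0_iso_of_bij (foam0_neg foam0_empty) foam0_empty id id). Qed.

End Foam0Iso.

(* Foams without circle components whose parallel transports are identities,
   so that every edge carries a single fiber. *)
Record pfoam (E : exact_cat) := PFoam {
  pV : finType; pE : finType; pB : finType;
  pend : pE * bool -> pV + pB;
  pbedge : pB -> pE * bool;
  pthin1 : pV -> pE * bool; pthin2 : pV -> pE * bool; pthick : pV -> pE * bool;
  pfib : pE -> CObj E;
  pses_i : forall v, CHom (pfib (pthin1 v).1) (pfib (pthick v).1);
  pses_p : forall v, CHom (pfib (pthick v).1) (pfib (pthin2 v).1)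
}.

Arguments pV {E} _. Arguments pE {E} _. Arguments pB {E} _. Arguments pend {E} _ _.
Arguments pbedge {E} _ _. Arguments pthin1 {E} _ _. Arguments pthin2 {E} _ _.
Arguments pthick {E} _ _. Arguments pfib {E} _ _.
Arguments pses_i {E} _ _. Arguments pses_p {E} _ _.

Definition pvertex_ends {E} (S : pfoam E) (v : pV S) : seq (pE S * bool) :=
  [:: pthin1 S v; pthin2 S v; pthick S v].
Arguments pvertex_ends {E} S v.

Record pfoam_wf {E} (S : pfoam E) : Prop := PFoamWf {
  pbedgeP : forall b h, (pend S h == inr b) = (h == pbedge S b);
  pvertex_endsP : forall v h, (pend S h == inl v) = (h \in pvertex_ends S v);
  pvertex_ends_uniq : forall v, uniq (pvertex_ends S v);
  porientP : forall v, (pthin1 S v).2 = (pthin2 S v).2 /\ (pthick S v).2 = ~~ (pthin1 S v).2;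
  pexactP : forall v, short_exact (pses_i S v) (pses_p S v)
}.

Section PlainFoam.
Variable E : exact_cat.
Implicit Types (S : pfoam E) (M : foam0 E).

Definition foam1_of_pfoam S : foam1 E :=
  @Foam1 E (pV S) (pE S) (pB S) void (pend S) (pbedge S)
    (pthin1 S) (pthin2 S) (pthick S) (fun h => pfib S h.1) (fun e => idm _)
    (fun c => match c with end) (fun c => match c with end) (pses_i S) (pses_p S).

Lemma foam1_of_pfoam_wf S : pfoam_wf S -> is_foam1 (foam1_of_pfoam S).
Proof.
case=> bedgeP endsP ends_uniq orientP exactP.
do 2 (split; first by case || move=> e; apply: idm_iso).
split; first exact: bedgeP.
split.
  move=> v; rewrite natn -[3%N]/(size (pvertex_ends S v)) -(card_uniqP (ends_uniq v)).
  by apply: eq_card => h; rewrite inE /= endsP.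
split.
  move=> v; have := ends_uniq v; rewrite /= !inE negb_or andbT => /andP[/andP[n12 n1k] n2k].
  have endsE h : h \in pvertex_ends S v -> pend S h = inl v by rewrite -endsP => /eqP.
  by split; rewrite /= ?n12 ?n1k ?n2k //; apply: endsE; rewrite !inE eqxx ?orbT.
by split.
Qed.

Definition pnull M :=
  exists S, pfoam_wf S /\ foam0_iso (foam1_boundary (foam1_of_pfoam S)) M.

Lemma pnull_iso M N : pnull M -> foam0_iso M N -> pnull N.
Proof. by case=> S [S_wf bdS] MN; exists S; split=> //; apply: foam0_iso_trans MN. Qed.

End PlainFoam.

Definition sum_map {A A' B B' : Type} (f : A -> A') (g : B -> B') (x : A + B) : A' + B' :=
  match x with inl a => inl (f a) | inr b => inr (g b) end.

Lemma sum_map_inj (A A' B B' : Type) (f : A -> A') (g : B -> B') :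
  injective f -> injective g -> injective (sum_map f g).
Proof. by move=> f_inj g_inj [a|b] [a'|b'] //= [] => [/f_inj|/g_inj] ->. Qed.

Section PFoamUnion.
Variable E : exact_cat.
Variables S T : pfoam E.

Notation uE := (pE S + pE T)%type.
Notation uV := (pV S + pV T)%type.
Notation uB := (pB S + pB T)%type.

Definition hl (h : pE S * bool) : uE * bool := (inl h.1, h.2).
Definition hr (h : pE T * bool) : uE * bool := (inr h.1, h.2).

Lemma hl_inj : injective hl. Proof. by move=> [e c] [e' c'] [-> ->]. Qed.
Lemma hr_inj : injective hr. Proof. by move=> [e c] [e' c'] [-> ->]. Qed.

Definition union_end (h : uE * bool) : uV + uB :=
  match h.1 with
  | inl e => sum_map inl inl (pend S (e, h.2))
  | inr e => sum_map inr inr (pend T (e, h.2))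
  end.

Definition union_fib (e : uE) : CObj E :=
  match e with inl e => pfib S e | inr e => pfib T e end.

Definition pfoam_union : pfoam E :=
  @PFoam E uV uE uB union_end
    (fun b => match b with inl b => hl (pbedge S b) | inr b => hr (pbedge T b) end)
    (fun v => match v with inl v => hl (pthin1 S v) | inr v => hr (pthin1 T v) end)
    (fun v => match v with inl v => hl (pthin2 S v) | inr v => hr (pthin2 T v) end)
    (fun v => match v with inl v => hl (pthick S v) | inr v => hr (pthick T v) end)
    union_fib
    (fun v => match v with inl v => pses_i S v | inr v => pses_i T v end)
    (fun v => match v with inl v => pses_p S v | inr v => pses_p T v end).

Lemma union_end_hl h : union_end (hl h) = sum_map inl inl (pend S h).
Proof. by case: h. Qed.

Lemma union_end_hr h : union_end (hr h) = sum_map inr inr (pend T h).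
Proof. by case: h. Qed.

Lemma union_halfedgeP (h : uE * bool) : {h' | h = hl h'} + {h' | h = hr h'}.
Proof. by case: h => [[e|e] c]; [left | right]; exists (e, c). Qed.

Lemma pfoam_union_wf : pfoam_wf S -> pfoam_wf T -> pfoam_wf pfoam_union.
Proof.
case=> bedgeS endsS uniqS orientS exactS [bedgeT endsT uniqT orientT exactT].
have injl : injective (sum_map (@inl (pV S) (pV T)) (@inl (pB S) (pB T))).
  by apply: sum_map_inj; apply: inl_inj.
have injr : injective (sum_map (@inr (pV S) (pV T)) (@inr (pB S) (pB T))).
  by apply: sum_map_inj; apply: inr_inj.
have endlr x y : (sum_map inl inl x == sum_map inr inr y :> uV + uB) = false.
  by case: x; case: y.
split.
- move=> [b|b] h; case: (union_halfedgeP h) => -[h' ->];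
    rewrite ?union_end_hl ?union_end_hr /= ?(inj_eq hl_inj) ?(inj_eq hr_inj) //.
  + by rewrite -[inr (inl b)]/(sum_map inl inl (inr b)) (inj_eq injl) bedgeS.
  + by rewrite -[inr (inl b)]/(sum_map inl inl (inr b)) eq_sym endlr.
  + by rewrite -[inr (inr b)]/(sum_map inr inr (inr b)) endlr.
  + by rewrite -[inr (inr b)]/(sum_map inr inr (inr b)) (inj_eq injr) bedgeT.
- move=> [v|v] h; case: (union_halfedgeP h) => -[h' ->];
    rewrite ?union_end_hl ?union_end_hr /pvertex_ends /=.
  + by rewrite -[inl (inl v)]/(sum_map inl inl (inl v)) (inj_eq injl) endsS !inE !(inj_eq hl_inj).
  + by rewrite -[inl (inl v)]/(sum_map inl inl (inl v)) eq_sym endlr !inE /hl /hr !xpair_eqE.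
  + by rewrite -[inl (inr v)]/(sum_map inr inr (inl v)) endlr !inE /hl /hr !xpair_eqE.
  + by rewrite -[inl (inr v)]/(sum_map inr inr (inl v)) (inj_eq injr) endsT !inE !(inj_eq hr_inj).
- by move=> [v|v]; rewrite /pvertex_ends /= ?(inj_eq hl_inj) ?(inj_eq hr_inj);
    [move: (uniqS v) | move: (uniqT v)]; rewrite /= !inE.
- by move=> [v|v]; [apply: orientS | apply: orientT].
- by move=> [v|v]; [apply: exactS | apply: exactT].
Qed.

Lemma pfoam_union_boundary :
  foam0_iso (foam1_boundary (foam1_of_pfoam pfoam_union))
    (foam0_union (foam1_boundary (foam1_of_pfoam S)) (foam1_boundary (foam1_of_pfoam T))).
Proof.
by apply: (@foam0_iso_of_bij _ (foam1_boundary (foam1_of_pfoam pfoam_union))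
  (foam0_union (foam1_boundary (foam1_of_pfoam S)) (foam1_boundary (foam1_of_pfoam T)))
  id id); case.
Qed.

End PFoamUnion.

Section Cylinder.
Variable E : exact_cat.
Variable M : foam0 E.

(* The identity cobordism of [M], bent so that both ends are outgoing. *)
Definition pfoam_cylinder : pfoam E :=
  @PFoam E void (pts M) (pts M + pts M)%type
    (fun h => inr (if h.2 == psgn M h.1 then inl h.1 else inr h.1))
    (fun b => match b with inl p => (p, psgn M p) | inr p => (p, ~~ psgn M p) end)
    (fun v => match v with end) (fun v => match v with end) (fun v => match v with end)
    (pobj M) (fun v => match v with end) (fun v => match v with end).

Lemma pfoam_cylinder_wf : pfoam_wf pfoam_cylinder.
Proof.
split; try by case.
move=> [q|q] [p c] /=; rewrite !xpair_eqE; have [<-|neq] := eqVneq p q => /=.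
- by case: (c == psgn M p); apply/eqP => // -[].
- by case: ifP => _; apply/eqP => // -[] [] /eqP; rewrite (negPf neq).
- by case: c; case: (psgn M p) => /=; apply/eqP => // -[].
- by case: ifP => _; apply/eqP => // -[] [] /eqP; rewrite (negPf neq).
Qed.

Lemma pnull_cylinder : pnull (foam0_union M (foam0_neg M)).
Proof.
exists pfoam_cylinder; split; first exact: pfoam_cylinder_wf.
by apply: (@foam0_iso_of_bij _ (foam1_boundary (foam1_of_pfoam pfoam_cylinder))
  (foam0_union M (foam0_neg M)) id id); case.
Qed.

End Cylinder.

Definition foam0_point {E : exact_cat} (s : bool) (X : CObj E) : foam0 E :=
  @Foam0 E unit (fun=> s) (fun=> X).

Section Vertex.
Variable E : exact_cat.
Variables X1 X2 X3 : CObj E.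
Variables (f : CHom X1 X2) (g : CHom X2 X3).
Hypothesis fg_exact : short_exact f g.

Notation VE := ((unit + unit) + unit)%type.

Definition vertex_outgoing (e : VE) : bool := if e is inl _ then true else false.

Definition vertex_fib (e : VE) : CObj E :=
  match e with inl (inl _) => X1 | inl (inr _) => X3 | inr _ => X2 end.

(* A single vertex with outgoing thin edges to [X1], [X3] and an incoming thick
   edge from [X2]; each edge has its other end on the boundary. *)
Definition pfoam_vertex : pfoam E :=
  @PFoam E unit VE VE
    (fun h => if h.2 == vertex_outgoing h.1 then inr h.1 else inl tt)
    (fun e => (e, vertex_outgoing e))
    (fun=> (inl (inl tt), false)) (fun=> (inl (inr tt), false)) (fun=> (inr tt, true))
    vertex_fib (fun=> f) (fun=> g).

Lemma pfoam_vertex_wf : pfoam_wf pfoam_vertex.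
Proof.
split=> //.
- by move=> b [e c]; case: b => [[[]|[]]|[]]; case: e => [[[]|[]]|[]]; case: c.
- by move=> [] [[[[]|[]]|[]] []].
Qed.

Lemma pnull_vertex :
  pnull (foam0_union (foam0_union (foam0_point true X1) (foam0_point true X3))
                     (foam0_neg (foam0_point true X2))).
Proof.
exists pfoam_vertex; split; first exact: pfoam_vertex_wf.
by apply: (@foam0_iso_of_bij _ (foam1_boundary (foam1_of_pfoam pfoam_vertex))
  (foam0_union (foam0_union (foam0_point true X1) (foam0_point true X3))
     (foam0_neg (foam0_point true X2)))
  id id); case=> [[[]|[]]|[]].
Qed.

End Vertex.

Lemma clos_rst_map (T U : Type) (R : relation T) (S : relation U) (F : T -> U) :
  (forall x y, R x y -> clos_refl_sym_trans U S (F x) (F y)) ->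
  forall x y, clos_refl_sym_trans T R x y -> clos_refl_sym_trans U S (F x) (F y).
Proof.
move=> RS x y; elim=> {x y} [x y /RS //|x|x y _|x y z _ xy _ yz].
- exact: rst_refl.
- exact: rst_sym.
- exact: rst_trans xy yz.
Qed.

Section PlainCobordism.
Variable E : exact_cat.
Implicit Types M N : foam0 E.

Definition pcobordant M N := pnull (foam0_union N (foam0_neg M)).
Definition pcob_eq := clos_refl_sym_trans _ pcobordant.

Lemma pnull_union M N : pnull M -> pnull N -> pnull (foam0_union M N).
Proof.
case=> S [S_wf bdS] [T [T_wf bdT]]; exists (pfoam_union S T).
split; first exact: pfoam_union_wf.
exact: foam0_iso_trans (pfoam_union_boundary S T) (foam0_iso_union bdS bdT).
Qed.

Lemma pcob_eq_cob_eq M N : pcob_eq M N -> cob_eq M N.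
Proof.
apply: (@clos_rst_map _ _ _ _ id) => {}M {}N [S [S_wf bdS]]; apply: rst_step.
by exists (foam1_of_pfoam S); split=> //; apply: foam1_of_pfoam_wf.
Qed.

Lemma pcob_eq_iso M N : foam0_iso M N -> pcob_eq M N.
Proof.
move=> MN; apply: rst_step; apply: pnull_iso (pnull_cylinder M) _.
exact: foam0_iso_union MN (foam0_iso_refl _).
Qed.

Lemma pcob_eq_unionl M M' N :
  pcob_eq M M' -> pcob_eq (foam0_union M N) (foam0_union M' N).
Proof.
apply: (@clos_rst_map _ _ _ _ (foam0_union^~ N)) => {}M {}M' MM'; apply: rst_step.
apply: pnull_iso (pnull_union MM' (pnull_cylinder N)) _.
apply: foam0_iso_trans (foam0_union_swap _ _ _ _) _.
exact: foam0_iso_union (foam0_iso_refl _) (foam0_iso_sym (foam0_neg_union _ _)).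
Qed.

Lemma pcob_eq_unionr M N N' :
  pcob_eq N N' -> pcob_eq (foam0_union M N) (foam0_union M N').
Proof.
move=> NN'; apply: rst_trans (pcob_eq_iso (foam0_union_comm _ _)) _.
apply: rst_trans (pcob_eq_unionl _ NN') _; exact: pcob_eq_iso (foam0_union_comm _ _).
Qed.

Lemma pcob_eq_neg M N : pcob_eq M N -> pcob_eq (foam0_neg M) (foam0_neg N).
Proof.
apply: (@clos_rst_map _ _ _ _ foam0_neg) => {}M {}N MN.
apply: rst_sym; apply: rst_step; apply: pnull_iso MN _.
apply: foam0_iso_trans (foam0_union_comm _ _) _.
exact: foam0_iso_union (foam0_iso_refl _) (foam0_iso_sym (foam0_neg_neg _)).
Qed.

Fixpoint foam0_of_kexpr (a : kexpr E) : foam0 E :=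
  match a with
  | kgen X => foam0_point true X
  | kzero => foam0_empty E
  | kadd a b => foam0_union (foam0_of_kexpr a) (foam0_of_kexpr b)
  | kopp a => foam0_neg (foam0_of_kexpr a)
  end.

Lemma pcob_eq_keq a b : keq a b -> pcob_eq (foam0_of_kexpr a) (foam0_of_kexpr b).
Proof.
elim=> {a b} /=.
- by move=> a; apply: rst_refl.
- by move=> a b _; apply: rst_sym.
- by move=> a b c _ ab _ bc; apply: rst_trans ab bc.
- by move=> a a' b b' _ aa' _ bb'; apply: rst_trans (pcob_eq_unionl _ aa') (pcob_eq_unionr _ bb').
- by move=> a a' _; apply: pcob_eq_neg.
- by move=> a b c; apply/pcob_eq_iso/foam0_union_assoc.
- by move=> a b; apply/pcob_eq_iso/foam0_union_comm.
- by move=> a; apply/pcob_eq_iso/foam0_union0.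
- (* [- a + a] bounds the cylinder over [- a]. *)
  move=> a; apply: rst_sym; apply: rst_step.
  apply: pnull_iso (pnull_cylinder (foam0_neg (foam0_of_kexpr a))) _.
  apply: foam0_iso_trans (foam0_iso_union (foam0_iso_refl _) (foam0_neg_neg _)) _.
  apply: foam0_iso_sym.
  apply: foam0_iso_trans (foam0_iso_union (foam0_iso_refl _) (foam0_neg_empty E)) _.
  exact: foam0_iso_trans (foam0_union_comm _ _) (foam0_union0 _).
- by move=> X1 X2 X3 f g fg; apply: rst_step; apply: pnull_vertex fg.
Qed.

End PlainCobordism.

(** * Every 0-foam is cobordant to the foam of a formal expression *)

Section NormalForm.
Variable E : exact_cat.
Implicit Types M : foam0 E.

Lemma gamma_class_foam0_of_kexpr (a : kexpr E) : gamma_class (foam0_of_kexpr a) = \pi a.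
Proof.
elim: a => [X||a IHa b IHb|a IHa] /=.
- by rewrite /gamma_class (big_pred1 tt) //; case.
- by rewrite /gamma_class big_pred0 //; case.
- by rewrite gamma_class_union IHa IHb piD.
- by rewrite gamma_class_neg IHa piN.
Qed.

Lemma foam0_point_iso s (X : CObj E) :
  foam0_iso (foam0_point s X) (foam0_of_kexpr (ksigned s X)).
Proof.
case: s; first exact: foam0_iso_refl.
exact: (@foam0_iso_of_bij _ (foam0_point false X) (foam0_neg (foam0_point true X)) id id).
Qed.

Definition foam0_delete M (p : pts M) : foam0 E :=
  @Foam0 E {q : pts M | q != p} (fun q => psgn M (val q)) (fun q => pobj M (val q)).

Lemma foam0_iso_delete M (p : pts M) :
  foam0_iso M (foam0_union (foam0_point (psgn M p) (pobj M p)) (foam0_delete p)).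
Proof.
pose f (q : pts M) : unit + {q : pts M | q != p} :=
  if insub q is Some q' then inr q' else inl tt.
pose g (x : unit + {q : pts M | q != p}) : pts M := if x is inr q then val q else p.
have fP q : (q = p /\ f q = inl tt) \/ exists2 q', f q = inr q' & val q' = q.
  by rewrite /f; case: insubP => [q' _ <-|/negPn/eqP ->]; [right; exists q' | left].
apply: (@foam0_iso_of_bij _ M
  (foam0_union (foam0_point (psgn M p) (pobj M p)) (foam0_delete p)) f g).
- by move=> q; case: (fP q) => [[-> ->]|[q' -> <-]].
- case=> [[]|q']; rewrite /f /g /=; first by rewrite insubN ?negbK.
  by rewrite -[sval q']/(val q') valK.
- by move=> q; case: (fP q) => [[-> ->]|[q' -> <-]].
- by move=> q; case: (fP q) => [[-> ->]|[q' -> <-]].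
Qed.

Lemma foam0_iso_empty M : #|pts M| = 0 -> foam0_iso M (foam0_empty E).
Proof.
move=> /card0_eq noM; have noP (p : pts M) : False by move: (noM p); rewrite !inE.
exists (fun p => match noP p with end); split=> [|p]; last by case: (noP p).
by exists (fun v : void => match v with end) => [p|[]]; case: (noP p).
Qed.

Lemma pcob_eq_normal_form M : exists a : kexpr E, pcob_eq M (foam0_of_kexpr a).
Proof.
have [n] := ubnP #|pts M|; elim: n M => // n IH M; rewrite ltnS => cardM.
case: (posnP #|pts M|) => [M0|/card_gt0P [p _]].
  by exists kzero; apply/pcob_eq_iso/foam0_iso_empty.
have [|a Ma] := IH (foam0_delete p).
  rewrite [X in (X < _)%N](card_sig (fun q => q != p)).
  apply: leq_trans cardM; rewrite [X in (_ <= X)%N](cardD1 p) inE add1n ltnS.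
  by apply/eq_leq/eq_card => q; rewrite !inE andbT.
exists (kadd (ksigned (psgn M p) (pobj M p)) a).
apply: rst_trans (pcob_eq_iso (foam0_iso_delete p)) _.
apply: rst_trans (pcob_eq_unionr _ Ma) _.
exact/pcob_eq_unionl/pcob_eq_iso/foam0_point_iso.
Qed.

End NormalForm.

Theorem mainTheorem5 (E : exact_cat) :
  [/\ (* well-defined on Cob_0 *)
      (forall M N : foam0 E, cob_eq M N -> keq (gamma0 M) (gamma0 N)),
      (* additive: disjoint union goes to sum *)
      (forall M N : foam0 E,
         keq (gamma0 (foam0_union M N)) (kadd (gamma0 M) (gamma0 N))),
      (* injective *)
      (forall M N : foam0 E, keq (gamma0 M) (gamma0 N) -> cob_eq M N)
    & (* surjective *)
      (forall x : kexpr E, exists M : foam0 E, keq (gamma0 M) x)].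
Proof.
split.
- by move=> M N /gamma_class_cob_eq MN; apply: keq_pi; rewrite !pi_gamma0.
- by move=> M N; apply: keq_pi; rewrite piD !pi_gamma0 gamma_class_union.
- move=> M N /pi_keq; rewrite !pi_gamma0 => MN.
  have [a Ma] := pcob_eq_normal_form M; have [b Nb] := pcob_eq_normal_form N.
  have ab : keq a b.
    apply: keq_pi; rewrite -!gamma_class_foam0_of_kexpr.
    by rewrite -(gamma_class_cob_eq (pcob_eq_cob_eq Ma)) -(gamma_class_cob_eq (pcob_eq_cob_eq Nb)).
  apply: pcob_eq_cob_eq; apply: rst_trans Ma _.
  exact: rst_trans (pcob_eq_keq ab) (rst_sym _ _ _ _ Nb).
- move=> x; exists (foam0_of_kexpr x); apply: keq_pi.
  by rewrite pi_gamma0 gamma_class_foam0_of_kexpr.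
Qed.
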